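(* The modulus multifunction $\mathrm{mod}\colon C([0,1])\rightrightarrows\mathbb N^{\mathbb N}$, which assigns to $f$ the set of all moduli of continuity of $f$, is not computable in polynomial time on the parametrised space $C(I)_i$ of interval functions.
   Context: Fix a finite non-empty alphabet $\Sigma$ and Baire space $\mathcal B=\Sigma^{*\Sigma^*}$. Oracle machines $M^?$ query an oracle $\varphi\in\mathcal B$ (a query costs one step); $M^\varphi(\mathbf a)$ is the output, $\mathrm{Time}_{M^?}(\varphi,\mathbf a)$ the step count. The size of $\varphi$ is $|\varphi|(n)=\max_{|\mathbf a|\le n}|\varphi(\mathbf a)|$. Second-order polynomials: smallest class of functions $\mathbb N^{\mathbb N}\times\mathbb N\to\mathbb N$ containing $(l,n)\mapsto p(n)$ for $p\in\mathbb N[X]$, closed under $P\mapsto((l,n)\mapsto l(P(l,n)))$, pointwise sum and product. For a partial surjection $\xi\colon\subseteq\mathcal B\to X$ and $\mu\colon\mathrm{dom}(\xi)\to\mathbb N^{\mathbb N}$ with non-decreasing values, $(X,\xi,\mu)$ is a preparametrised space. A multifunction $f\colon X\rightrightarrows Y$ between such spaces is computable in polynomial time if some oracle machine $M^?$ and second-order polynomials $P,Q$ satisfy for all $\varphi\in\mathrm{dom}(\xi_X)$: $M^\varphi$ total with $\xi_Y(M^\varphi)\in f(\xi_X(\varphi))$, $\mathrm{Time}_{M^?}(\varphi,\mathbf a)\le P(\mu_X(\varphi),|\mathbf a|)$, $\mu_Y(M^\varphi)(n)\le Q(\mu_X(\varphi),n)$. Here $\mathbb N^{\mathbb N}$ carries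 the total representation $\xi(\varphi)(n)=|\varphi(\mathtt1^n)|$ with the standard parameter (the size function). A function $\nu\colon\mathbb N\to\mathbb N$ is a modulus of continuity of $f\in C([0,1])$ if $|x-y|\le2^{-\nu(n)}$ implies $|f(x)-f(y)|\le2^{-n}$ for all $x,y\in[0,1]$, $n\in\mathbb N$. Encodings: integers in binary with sign bit; dyadic rationals $\mathbb D$ by finite binary expansion; pairs via a fixed pairing. $\mathrm I\mathbb D$: finite dyadic intervals $[r\pm\varepsilon]=[r-\varepsilon,r+\varepsilon]$ (pair of codes) and $[-\infty,\infty]$; $\mathrm{diam}([r\pm\varepsilon])=2\varepsilon$. A $\xi_{\mathbb R_i}$-name of $x$ is $\varphi\colon\mathbb N\to\mathrm I\mathbb D$ with $(\varphi(n))_n$ nested and $\bigcap_n\varphi(n)=\{x\}$. $C(I)_i=(C([0,1]),\xi_{if},\mu_{if})$: $\psi\colon\mathrm I\mathbb D\to\mathrm I\mathbb D$ is a name of $f$ iff for every $\xi_{\mathbb R_i}$-name $\varphi$ of some $x\in[0,1]$, $\psi\circ\varphi$ is a $\xi_{\mathbb R_i}$-name of $f(x)$; $\mu_{if}(\psi)(n)=\lceil\mathrm{lb}(\|f\|_\infty+1)\rceil+\min\{N\mid\forall J\in\mathrm I\mathbb D:\mathrm{diam}(J)\le2^{-N}\Rightarrow\mathrm{diam}(\psi(J))\le2^{-n}\}$. *)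

From Stdlib Require Import Reals ZArith.
From mathcomp Require Import ssreflect ssrfun ssrbool eqtype ssrnat seq choice fintype.

Set Implicit Arguments.
Unset Strict Implicit.
Unset Printing Implicit Defensive.

(* Oracle Turing machines over an alphabet S (tape alphabet = option S,     *)
(* None = blank).  Three one-way-infinite tapes: work tape (holds the input  *)
(* initially and the output at the end), query tape, answer tape.           *)
(* Entering the query state replaces the answer tape by phi(query word) in  *)
(* one step (a query costs one step).                                       *)

Inductive move := MoveL | MoveR | MoveS.

Record OracleMachine (S : finType) := {
  om_state : finType;
  om_start : om_state;
  om_halt : om_state;
  om_query : om_state;
  om_answer : om_state;
  om_delta : om_state -> option S -> option S -> option S ->
    om_state * (option S * move) * (option S * move) * (option S * move)
}.

Record tape (S : Type) := Tape { cells : seq (option S); head : nat }.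

Definition empty_tape (S : Type) : tape S := Tape [::] 0.
Definition tape_read (S : Type) (t : tape S) : option S := nth None (cells t) (head t).
Definition tape_write (S : Type) (t : tape S) (a : option S) : tape S :=
  Tape (set_nth None (cells t) (head t) a) (head t).
Definition tape_move (S : Type) (t : tape S) (m : move) : tape S :=
  match m with
  | MoveL => Tape (cells t) (head t).-1
  | MoveR => Tape (cells t) (head t).+1
  | MoveS => t
  end.
Definition tape_act (S : Type) (t : tape S) (am : option S * move) : tape S :=
  tape_move (tape_write t am.1) am.2.

Fixpoint word_of (S : Type) (l : seq (option S)) : seq S :=
  match l with
  | Some x :: l' => x :: word_of l'
  | _ => [::]
  end.
Definition tape_word (S : Type) (t : tape S) : seq S := word_of (cells t).

Record config (S : finType) (M : OracleMachine S) := Config {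
  c_state : om_state M;
  c_work : tape S;
  c_query : tape S;
  c_ans : tape S
}.

Definition step (S : finType) (M : OracleMachine S) (phi : seq S -> seq S)
  (c : config M) : config M :=
  if c_state c == om_halt M then c
  else if c_state c == om_query M then
    Config (om_answer M) (c_work c) (c_query c)
           (Tape (map Some (phi (tape_word (c_query c)))) 0)
  else
    match om_delta (c_state c) (tape_read (c_work c)) (tape_read (c_query c))
                   (tape_read (c_ans c)) with
    | (q', a1, a2, a3) =>
        Config q' (tape_act (c_work c) a1) (tape_act (c_query c) a2)
               (tape_act (c_ans c) a3)
    end.

Definition init_config (S : finType) (M : OracleMachine S) (a : seq S) : config M :=
  Config (om_start M) (Tape (map Some a) 0) (@empty_tape S) (@empty_tape S).

Definition run (S : finType) (M : OracleMachine S) (phi : seq S -> seq S)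
  (a : seq S) (t : nat) : config M :=
  iter t (step phi) (init_config M a).

Definition HaltsIn (S : finType) (M : OracleMachine S) (phi : seq S -> seq S)
  (a : seq S) (t : nat) (out : seq S) : Prop :=
  c_state (run M phi a t) = om_halt M /\
  (forall t', t' < t -> c_state (run M phi a t') <> om_halt M) /\
  out = tape_word (c_work (run M phi a t)).

(* Second-order polynomials (syntax and evaluation).                        *)

Inductive sop :=
  | SPoly of seq nat          (* (l,n) |-> p(n), p in N[X] given by its coefficients *)
  | SApp of sop
  | SAdd of sop & sop
  | SMul of sop & sop.

Fixpoint sop_eval (P : sop) (l : nat -> nat) (n : nat) : nat :=
  match P with
  | SPoly cs => foldr (fun c acc => c + n * acc) 0 cs
  | SApp P1 => l (sop_eval P1 l n)
  | SAdd P1 P2 => sop_eval P1 l n + sop_eval P2 l n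
  | SMul P1 P2 => sop_eval P1 l n * sop_eval P2 l n
  end.

(* Encodings over S, with two distinguished distinct symbols b0 ('0'), b1   *)
(* ('1').                                                                   *)

Section Encodings.
Variables (S : finType) (b0 b1 : S).

Definition bit_of (x : S) : option nat :=
  if x == b0 then Some 0 else if x == b1 then Some 1 else None.

(* natural numbers in binary, most significant bit first *)
Definition decode_nat (s : seq S) : option nat :=
  foldl (fun acc x => match acc, bit_of x with
                      | Some v, Some b => Some (2 * v + b)
                      | _, _ => None end) (Some 0) s.

(* integers: sign bit (b0 = +, b1 = -) followed by the binary magnitude *)
Definition decode_int (s : seq S) : option Z :=
  match s with
  | x :: s' =>
      match decode_nat s' with
      | Some v => if x == b0 then Some (Z.of_nat v)
                  else if x == b1 then Some (- Z.of_nat v)%Z else None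
      | None => None
      end
  | [::] => None
  end.

(* pairing: <u,v> = u1 u1 u2 u2 ... uk uk b0 b1 v *)
Fixpoint unpair (s : seq S) : option (seq S * seq S) :=
  match s with
  | x :: y :: t =>
      if (x == b0) && (y == b1) then Some ([::], t)
      else if x == y then
        match unpair t with
        | Some (u, v) => Some (x :: u, v)
        | None => None
        end
      else None
  | _ => None
  end.

(* dyadic rationals m * 2^-k, coded as <int m, nat k> (finite binary expansion) *)
Definition decode_dyadic (s : seq S) : option R :=
  match unpair s with
  | Some (u, v) =>
      match decode_int u, decode_nat v with
      | Some z, Some k => Some (IZR z / 2 ^ k)%R
      | _, _ => None
      end
  | None => None
  end.

Inductive IDyadic := IFin of R & R  (* [r +- eps] *) | IInf (* [-oo, oo] *).

Definition decode_interval (s : seq S) : option IDyadic :=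
  match s with
  | [::] => Some IInf
  | _ =>
    match unpair s with
    | Some (u, v) =>
        match decode_dyadic u, decode_dyadic v with
        | Some r, Some e => if Rle_dec 0 e then Some (IFin r e) else None
        | _, _ => None
        end
    | None => None
    end
  end.

Definition in_interval (I : IDyadic) (x : R) : Prop :=
  match I with
  | IFin r e => (r - e <= x <= r + e)%R
  | IInf => True
  end.

Definition IsRealNameI (phi : nat -> seq S) (x : R) : Prop :=
  (forall n, exists I, decode_interval (phi n) = Some I) /\
  (forall n I J, decode_interval (phi n) = Some I ->
     decode_interval (phi n.+1) = Some J ->
     forall y, in_interval J y -> in_interval I y) /\
  (forall y, (forall n I, decode_interval (phi n) = Some I -> in_interval I y)
             <-> y = x).

Definition IsFunNameI (psi : seq S -> seq S) (f : R -> R) : Prop :=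
  forall (phi : nat -> seq S) (x : R), (0 <= x <= 1)%R ->
    IsRealNameI phi x -> IsRealNameI (fun n => psi (phi n)) (f x).

Definition ModCondI (psi : seq S -> seq S) (n N : nat) : Prop :=
  forall s r e, decode_interval s = Some (IFin r e) -> (2 * e <= / 2 ^ N)%R ->
    exists r' e', decode_interval (psi s) = Some (IFin r' e') /\
                  (2 * e' <= / 2 ^ n)%R.

(* mu_{if}(psi) = m ; the value exists only when all the minima exist *)
Definition IsMuIf (psi : seq S -> seq S) (f : R -> R) (m : nat -> nat) : Prop :=
  forall n, exists k N,
    (* k = ceil(lb(||f||_oo + 1)), i.e. least k with ||f||_oo + 1 <= 2^k *)
    ((forall x, (0 <= x <= 1)%R -> (Rabs (f x) + 1 <= 2 ^ k)%R) /\
     (forall k', (forall x, (0 <= x <= 1)%R -> (Rabs (f x) + 1 <= 2 ^ k')%R) ->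
                 k <= k')) /\
    ModCondI psi n N /\ (forall N', ModCondI psi n N' -> N <= N') /\
    m n = k + N.

End Encodings.

Definition Continuous01 (f : R -> R) : Prop :=
  forall x, (0 <= x <= 1)%R -> forall eps, (0 < eps)%R ->
    exists delta, (0 < delta)%R /\
      forall y, (0 <= y <= 1)%R -> (Rabs (x - y) < delta)%R ->
        (Rabs (f x - f y) < eps)%R.

Definition IsModulus (f : R -> R) (nu : nat -> nat) : Prop :=
  forall n x y, (0 <= x <= 1)%R -> (0 <= y <= 1)%R ->
    (Rabs (x - y) <= / 2 ^ nu n)%R -> (Rabs (f x - f y) <= / 2 ^ n)%R.

(* Adversary argument.  Let psi0 be the interval name of the zero function that
   answers [r +- e] by [+-2e] if e > 2^-j and by [+-e] otherwise.  Its parameter is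
   linear, so on input 1^(j+1) the machine runs in time polynomial in j and, for j
   large, asks fewer than 2^(j+1)/9 queries.  Among 2^(j+1) evenly spaced candidate
   points some x0 is then far from every query of radius at most 2^-j.  A tent of
   height 2^-j at x0 that vanishes outside a neighbourhood of x0 of radius
   2^-q <= 2^-|out| has a name answering all these queries as psi0 does, so the
   machine returns the same output out on it; yet |out| is not the value at j+1 of
   a modulus of continuity of that tent. *)

Set Warnings "-notation-overridden".
From Stdlib Require Import Reals Lra Lia ZArith Classical ClassicalEpsilon Wf_nat.
From mathcomp Require Import ssreflect ssrfun ssrbool eqtype ssrnat seq fintype zify.

Set Implicit Arguments.
Unset Strict Implicit.
Unset Printing Implicit Defensive.

(** * Runs of oracle machines *)

Section OracleRuns.
Variables (S : finType) (M : OracleMachine S).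

Fixpoint queries (phi : seq S -> seq S) (c : config M) (t : nat) : seq (seq S) :=
  if t is t'.+1 then
    (if c_state c == om_query M then [:: tape_word (c_query c)] else [::])
      ++ queries phi (step phi c) t'
  else [::].

Lemma size_queries phi c t : size (queries phi c t) <= t.
Proof.
elim: t c => [|t IH] c //=; rewrite size_cat.
by have := IH (step phi c); case: ifP => _ /=; lia.
Qed.

Lemma iter_step_agree phi1 phi2 c t :
  {in queries phi1 c t, phi1 =1 phi2} ->
  forall t', t' <= t -> iter t' (step phi2) c = iter t' (step phi1) c.
Proof.
elim: t c => [|t IH] c agree [|t'] // le_t't.
have step_eq : step phi2 c = step phi1 c.
  rewrite /step; case: ifP => // _; case: ifP => // is_query.
  by rewrite agree //= is_query mem_head.
rewrite !iterSr step_eq; apply: IH => // w w_in.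
by apply: agree; rewrite /= mem_cat w_in orbT.
Qed.

Lemma halts_agree phi1 phi2 a t out :
  HaltsIn M phi1 a t out -> {in queries phi1 (init_config M a) t, phi1 =1 phi2} ->
  HaltsIn M phi2 a t out.
Proof.
move=> [halted [running ->]] /iter_step_agree same.
rewrite /HaltsIn /run !same //; split=> //; split=> // t' lt_t't.
by rewrite same ?(ltnW lt_t't) //; apply: running.
Qed.

Lemma halts_output_unique phi a t1 t2 o1 o2 :
  HaltsIn M phi a t1 o1 -> HaltsIn M phi a t2 o2 -> o1 = o2.
Proof.
move=> [halted1 [running1 ->]] [halted2 [running2 ->]].
by case: (ltngtP t1 t2) => [/running2/(_ halted1)|/running1/(_ halted2)|->].
Qed.

Lemma halting_output_length phi b :
  (forall a, exists t out, HaltsIn M phi a t out) ->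
  exists nu : nat -> nat,
    forall n, exists t out, HaltsIn M phi (nseq n b) t out /\ nu n = size out.
Proof.
move=> total.
apply: (choice (fun n k => exists t out, HaltsIn M phi (nseq n b) t out /\ k = size out)) => n.
by have [t [out halts]] := total (nseq n b); exists (size out), t, out.
Qed.

End OracleRuns.

(** * Polynomial bounds and pigeonhole *)

Lemma sop_eval_mono P (l l' : nat -> nat) n :
  (forall x, l x <= l' x) -> {homo l' : x y / x <= y} ->
  sop_eval P l n <= sop_eval P l' n.
Proof.
move=> le_ll' mono_l'; elim: P => [cs|P IH|P1 IH1 P2 IH2|P1 IH1 P2 IH2] //=.
- exact: leq_trans (le_ll' _) (mono_l' _ _ IH).
- exact: leq_add.
- exact: leq_mul.
Qed.

Lemma horner_nat_le cs n :
  foldr (fun c acc => c + n * acc) 0 cs <= sumn cs * (n + 1) ^ size cs.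
Proof.
elim: cs => [|c cs IH] //=.
have : 1 <= (n + 1) ^ size cs by rewrite expn_gt0 addn1.
rewrite expnS; move: IH; set F := foldr _ _ _; set X := _ ^ _; nia.
Qed.

Lemma sop_eval_shift_poly P c :
  exists A d, forall n, sop_eval P (fun x => x + c) n <= A * (n + 1) ^ d.
Proof.
elim: P => [cs|P [A [d IH]]|P1 [A1 [d1 IH1]] P2 [A2 [d2 IH2]]
           |P1 [A1 [d1 IH1]] P2 [A2 [d2 IH2]]] /=.
- by exists (sumn cs), (size cs) => n; apply: horner_nat_le.
- exists (A + c), d => n.
  have : 1 <= (n + 1) ^ d by rewrite expn_gt0 addn1.
  by have := IH n; nia.
- exists (A1 + A2), (d1 + d2) => n.
  have : (n + 1) ^ d1 <= (n + 1) ^ (d1 + d2) by apply: leq_pexp2l; lia.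
  have : (n + 1) ^ d2 <= (n + 1) ^ (d1 + d2) by apply: leq_pexp2l; lia.
  by have := IH1 n; have := IH2 n; nia.
- exists (A1 * A2), (d1 + d2) => n.
  by rewrite expnD; have := leq_mul (IH1 n) (IH2 n); nia.
Qed.

Lemma sqr_le_exp2 s : 4 <= s -> s * s <= 2 ^ s.
Proof.
elim: s => [|s IH] // le4s; case: (ltngtP s 3) => [|/IH|->] //; first lia.
by rewrite expnS; nia.
Qed.

(* With j = 2^s - 2 both sides become powers of 2, and C + s d + 1 <= s^2 <= 2^s. *)
Lemma poly_lt_exp2 C d : exists j, C * j.+2 ^ d < 2 ^ j.+1.
Proof.
pose s := C + d + 4.
have : s * s <= 2 ^ s by apply: sqr_le_exp2; lia.
have : C < 2 ^ C by apply: ltn_expl.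
exists (2 ^ s - 2); have -> : (2 ^ s - 2).+2 = 2 ^ s by lia.
have -> : (2 ^ s - 2).+1 = 2 ^ s - 1 by lia.
rewrite -expnM; apply: leq_trans (_ : 2 ^ (C + s * d) <= _).
  by rewrite expnD ltn_pmul2r ?expn_gt0.
by apply: leq_pexp2l => //; nia.
Qed.

Lemma sop_eval_shift_lt_exp2 P c C :
  exists j, C * sop_eval P (fun x => x + c) j.+1 < 2 ^ j.+1.
Proof.
have [A [d le_poly]] := sop_eval_shift_poly P c.
have [j lt_exp] := poly_lt_exp2 (C * A) d.
exists j; apply: leq_ltn_trans lt_exp.
by rewrite -mulnA leq_mul2l; have := le_poly j.+1; rewrite addn1 => ->; rewrite orbT.
Qed.

Section Pigeonhole.
Variables (A : eqType) (hit : A -> nat -> Prop).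
Hypothesis hit_window : forall s i i', hit s i -> hit s i' -> i <= i' + 4.

Lemma hits_in_window s :
  exists2 W : seq nat, size W <= 9 & forall i, hit s i -> i \in W.
Proof.
case: (classic (exists i, hit s i)) => [[i0 hit0]|no_hit].
- exists (iota (i0 - 4) 9); rewrite ?size_iota // => i hit_i.
  by have := hit_window hit_i hit0; have := hit_window hit0 hit_i; rewrite mem_iota; lia.
- by exists [::] => // i hit_i; case: no_hit; exists i.
Qed.

Lemma hits_covered (L : seq A) :
  exists2 B : seq nat, size B <= 9 * size L &
    forall s i, s \in L -> hit s i -> i \in B.
Proof.
elim: L => [|s L [B sizeB coverB]]; first by exists [::].
have [W sizeW coverW] := hits_in_window s.
exists (W ++ B); first by rewrite size_cat /=; lia.
move=> s' i; rewrite in_cons mem_cat => /orP[/eqP-> /coverW->//|s'L hit_i].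
by rewrite (coverB _ _ s'L hit_i) orbT.
Qed.

Lemma unhit_index (L : seq A) N :
  9 * size L < N -> exists2 i, i < N & forall s, s \in L -> ~ hit s i.
Proof.
move=> few; have [B sizeB coverB] := hits_covered L.
case: (boolP (all (fun i => i \in B) (iota 0 N))) => [/allP sub|/allPn[i]].
  have := uniq_leq_size (iota_uniq 0 N) sub; rewrite size_iota.
  by move/(leq_trans few); rewrite ltnNge sizeB.
rewrite mem_iota => /andP[_ lt_iN] i_notin_B; exists i => // s sL hit_si.
by move/negP: i_notin_B; apply; apply: coverB hit_si.
Qed.

End Pigeonhole.

Local Open Scope R_scope.

(** * Dyadic rationals and their codes *)

Lemma pow2_gt0 k : 0 < 2 ^ k.
Proof. by apply: pow_lt; lra. Qed.

Lemma ipow2_gt0 k : 0 < / 2 ^ k.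
Proof. exact/Rinv_0_lt_compat/pow2_gt0. Qed.

Lemma ipow2_S k : / 2 ^ k.+1 = / 2 ^ k / 2.
Proof. by rewrite /= Rinv_mult; have := pow2_gt0 k; lra. Qed.

Lemma ipow2_le a b : (a <= b)%N -> / 2 ^ b <= / 2 ^ a.
Proof.
move=> le_ab; apply: Rinv_le_contravar; first exact: pow2_gt0.
by apply: Rle_pow; [lra|apply/leP].
Qed.

Lemma ipow2_le1 k : / 2 ^ k <= 1.
Proof. by have := ipow2_le (leq0n k); rewrite /= Rinv_1. Qed.

Lemma INR_expn2 k : INR (2 ^ k)%N = 2 ^ k.
Proof. by elim: k => [|k IH] //; rewrite expnS mult_INR IH. Qed.

Definition dyadic (x : R) : Prop := exists z k, x = IZR z / 2 ^ k.

Lemma dyadic_IZR z : dyadic (IZR z).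
Proof. by exists z, 0%N; rewrite /= Rdiv_1_r. Qed.

Lemma dyadic_INR n : dyadic (INR n).
Proof. rewrite INR_IZR_INZ; exact: dyadic_IZR. Qed.

Lemma dyadic_ipow2 k : dyadic (/ 2 ^ k).
Proof. by exists 1%Z, k; rewrite /Rdiv Rmult_1_l. Qed.

Lemma dyadic_pow2 k : dyadic (2 ^ k).
Proof. by rewrite -INR_expn2; apply: dyadic_INR. Qed.

Lemma dyadicD x y : dyadic x -> dyadic y -> dyadic (x + y).
Proof.
move=> [z1 [k1 ->]] [z2 [k2 ->]].
exists (z1 * 2 ^ Z.of_nat k2 + z2 * 2 ^ Z.of_nat k1)%Z, (k1 + k2)%N.
rewrite plus_IZR !mult_IZR -!pow_IZR pow_add.
by have := pow2_gt0 k1; have := pow2_gt0 k2; move=> ? ?; field; lra.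
Qed.

Lemma dyadicM x y : dyadic x -> dyadic y -> dyadic (x * y).
Proof.
move=> [z1 [k1 ->]] [z2 [k2 ->]]; exists (z1 * z2)%Z, (k1 + k2)%N.
rewrite mult_IZR pow_add.
by have := pow2_gt0 k1; have := pow2_gt0 k2; move=> ? ?; field; lra.
Qed.

Lemma dyadicN x : dyadic x -> dyadic (- x).
Proof.
move=> [z [k ->]]; exists (- z)%Z, k; rewrite opp_IZR.
by have := pow2_gt0 k; move=> ?; field; lra.
Qed.

Lemma dyadicB x y : dyadic x -> dyadic y -> dyadic (x - y).
Proof. by move=> dx dy; apply/dyadicD/dyadicN. Qed.

Lemma dyadic_half x : dyadic x -> dyadic (x / 2).
Proof. by move=> dx; apply: dyadicM dx _; rewrite -[2]pow_1; apply: dyadic_ipow2. Qed.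

Lemma dyadic_max x y : dyadic x -> dyadic y -> dyadic (Rmax x y).
Proof. by move=> dx dy; apply: Rmax_case. Qed.

Lemma dyadic_abs x : dyadic x -> dyadic (Rabs x).
Proof. by move=> dx; rewrite /Rabs; case: Rcase_abs => _ //; apply: dyadicN. Qed.

Section Encodings.
Variables (S : finType) (b0 b1 : S).
Hypothesis b0_neq_b1 : b0 != b1.

Lemma bit_of_bool (b : bool) : bit_of b0 b1 (if b then b1 else b0) = Some (nat_of_bool b).
Proof.
rewrite /bit_of; case: b; last by rewrite eqxx.
by rewrite eq_sym (negbTE b0_neq_b1) eqxx.
Qed.

Lemma decode_nat_rcons s x v b :
  decode_nat b0 b1 s = Some v -> bit_of b0 b1 x = Some b ->
  decode_nat b0 b1 (rcons s x) = Some (2 * v + b)%N.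
Proof. by rewrite /decode_nat -cats1 foldl_cat => -> /= ->. Qed.

Lemma decode_nat_onto v : exists s, decode_nat b0 b1 s = Some v.
Proof.
elim/ltn_ind: v => -[_|v IH]; first by exists [::].
have [s decode_s] := IH v.+1./2 ltac:(lia).
exists (rcons s (if odd v.+1 then b1 else b0)).
rewrite (decode_nat_rcons decode_s (bit_of_bool _)); congr Some.
by rewrite -[in RHS](odd_double_half v.+1); lia.
Qed.

Lemma decode_int_onto z : exists s, decode_int b0 b1 s = Some z.
Proof.
have [s decode_s] := decode_nat_onto (Z.abs_nat z).
exists ((if (z <? 0)%Z then b1 else b0) :: s); rewrite /decode_int decode_s.
rewrite Nat2Z.inj_abs_nat; case: Z.ltb_spec => sgn_z.
- by rewrite eq_sym (negbTE b0_neq_b1) eqxx; congr Some; lia.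
- by rewrite eqxx; congr Some; lia.
Qed.

Definition pair_code (u v : seq S) : seq S :=
  flatten [seq [:: x; x] | x <- u] ++ [:: b0, b1 & v].

Lemma unpair_pair_code u v : unpair b0 b1 (pair_code u v) = Some (u, v).
Proof.
elim: u => [|x u IH] /=; first by rewrite !eqxx.
have -> : (x == b0) && (x == b1) = false.
  by case: (x =P b0) => // ->; rewrite (negbTE b0_neq_b1).
by rewrite eqxx IH.
Qed.

Lemma decode_dyadic_onto x : dyadic x -> exists s, decode_dyadic b0 b1 s = Some x.
Proof.
move=> [z [k ->]]; have [u decode_u] := decode_int_onto z.
have [v decode_v] := decode_nat_onto k.
by exists (pair_code u v); rewrite /decode_dyadic unpair_pair_code decode_u decode_v.
Qed.

Lemma decode_interval_onto r e :
  dyadic r -> dyadic e -> 0 <= e -> exists s, decode_interval b0 b1 s = Some (IFin r e).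
Proof.
move=> dr de e_ge0; have [u decode_u] := decode_dyadic_onto dr.
have [v decode_v] := decode_dyadic_onto de.
exists (pair_code u v); move: (unpair_pair_code u v); rewrite /decode_interval.
case: (pair_code u v) => [|x s] // ->.
by rewrite decode_u decode_v; case: Rle_dec.
Qed.

Lemma decode_dyadic_dyadic s x : decode_dyadic b0 b1 s = Some x -> dyadic x.
Proof.
rewrite /decode_dyadic; case: (unpair b0 b1 s) => [[u v]|] //.
case: (decode_int b0 b1 u) => [z|] //; case: (decode_nat b0 b1 v) => [k|] //.
by move=> [<-]; exists z, k.
Qed.

Lemma decode_interval_fin s r e :
  decode_interval b0 b1 s = Some (IFin r e) -> [/\ dyadic r, dyadic e & 0 <= e].
Proof.
rewrite /decode_interval; case: s => [|x s] //.
case: (unpair b0 b1 (x :: s)) => [[u v]|] //.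
case dr: (decode_dyadic b0 b1 u) => [r'|] //; case de: (decode_dyadic b0 b1 v) => [e'|] //.
case: Rle_dec => // e'_ge0 [<- <-].
by split=> //; [apply: decode_dyadic_dyadic dr|apply: decode_dyadic_dyadic de].
Qed.

End Encodings.

(** * Names of reals and of functions *)

Lemma ex_minimal (P : nat -> Prop) :
  (exists n, P n) -> exists n, P n /\ forall m, P m -> (n <= m)%N.
Proof.
move=> exP; have [n [[Pn min_n] _]] :=
  @dec_inh_nat_subset_has_unique_least_element P (fun n => classic (P n)) exP.
by exists n; split=> // m /min_n/leP.
Qed.

Section RealNames.
Variables (S : finType) (b0 b1 : S).
Implicit Types (phi : nat -> seq S) (x : R).

Lemma interval_incl_fin r e r' e' :
  0 <= e' -> (forall y, in_interval (IFin r' e') y -> in_interval (IFin r e) y) ->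
  r - e <= r' - e' /\ r' + e' <= r + e.
Proof.
move=> e'_ge0 incl; split.
- by have /= := incl (r' - e') ltac:(simpl; lra); lra.
- by have /= := incl (r' + e') ltac:(simpl; lra); lra.
Qed.

Lemma name_nested phi x n m I J :
  IsRealNameI b0 b1 phi x -> (n <= m)%N ->
  decode_interval b0 b1 (phi n) = Some I -> decode_interval b0 b1 (phi m) = Some J ->
  forall y, in_interval J y -> in_interval I y.
Proof.
move=> [decodes [nested _]] /subnKC <-; elim: (m - n)%N J => [|k IH] J decode_n.
  by rewrite addn0 decode_n => -[->].
have [K decode_K] := decodes (n + k)%N.
rewrite addnS => decode_J y /(nested _ _ _ decode_K decode_J).
exact: IH decode_K y.
Qed.

Lemma name_contains phi x n I :
  IsRealNameI b0 b1 phi x -> decode_interval b0 b1 (phi n) = Some I -> in_interval I x.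
Proof. by move=> [_ [_ single]]; apply: (proj2 (single x)). Qed.

(* Otherwise every interval, being wider than 2 eps and containing x, would
   contain x - eps or x + eps; by nestedness one of them lies in all of them. *)
Lemma name_small phi x eps :
  IsRealNameI b0 b1 phi x -> 0 < eps ->
  exists n r e, decode_interval b0 b1 (phi n) = Some (IFin r e) /\ e <= eps.
Proof.
move=> name eps_gt0; apply: NNPP => no_small.
have [decodes [_ single]] := name.
have one_side n I : decode_interval b0 b1 (phi n) = Some I ->
    in_interval I (x - eps) \/ in_interval I (x + eps).
  case: I => [r e|] decode_I /=; last by left.
  have /= := name_contains name decode_I.
  have : eps < e by apply: Rnot_le_lt => le_e; apply: no_small; exists n, r, e.
  lra.
have excluded y : y <> x ->
    exists n I, decode_interval b0 b1 (phi n) = Some I /\ ~ in_interval I y.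
  move=> y_neq_x; apply: NNPP => none; apply/y_neq_x/(proj1 (single y)) => n I decode_I.
  by apply: NNPP => y_notin; apply: none; exists n, I.
have [m [I [decode_I not_left]]] := excluded (x - eps) ltac:(lra).
have [n [J [decode_J not_right]]] := excluded (x + eps) ltac:(lra).
have [K decode_K] := decodes (maxn m n).
case: (one_side _ _ decode_K) => [left_in|right_in].
- exact/not_left/(name_nested name (leq_maxl m n) decode_I decode_K).
- exact/not_right/(name_nested name (leq_maxr m n) decode_J decode_K).
Qed.

Lemma mu_if_exists (psi : seq S -> seq S) f k0 c :
  (forall x, 0 <= x <= 1 -> Rabs (f x) + 1 <= 2 ^ k0) ->
  (forall n, ModCondI b0 b1 psi n (n + c)) ->
  exists m, IsMuIf b0 b1 psi f m /\ forall n, (m n <= k0 + (n + c))%N.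
Proof.
move=> bounded mod_c.
have [k [bound_k min_k]] :=
  ex_minimal (P := fun k => forall x, 0 <= x <= 1 -> Rabs (f x) + 1 <= 2 ^ k)
    (ex_intro _ k0 bounded).
have [N min_N] : exists N : nat -> nat, forall n, ModCondI b0 b1 psi n (N n) /\
    forall N', ModCondI b0 b1 psi n N' -> (N n <= N')%N.
  apply: (choice (fun n N => ModCondI b0 b1 psi n N /\
    forall N', ModCondI b0 b1 psi n N' -> (N <= N')%N)) => n.
  by apply: ex_minimal; exists (n + c)%N.
exists (fun n => k + N n)%N; split=> n.
- by exists k, (N n); have [? ?] := min_N n.
- by have := min_k _ bounded; have := (min_N n).2 _ (mod_c n); lia.
Qed.

End RealNames.

Section IntervalMaps.
Variables (S : finType) (b0 b1 : S).
Hypothesis b0_neq_b1 : b0 != b1.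

Definition itv_of (p : R * R) : IDyadic := IFin ((p.1 + p.2) / 2) ((p.2 - p.1) / 2).

Lemma in_itv_of p y : in_interval (itv_of p) y <-> p.1 <= y <= p.2.
Proof. by rewrite /=; split; lra. Qed.

Definition enc_itv (p : R * R) : seq S :=
  epsilon (inhabits [::]) (fun s => decode_interval b0 b1 s = Some (itv_of p)).

Definition interval_map (g : R -> R -> R * R) (s : seq S) : seq S :=
  if decode_interval b0 b1 s is Some (IFin r e) then enc_itv (g r e) else [::].

Lemma interval_map_ext g g' s :
  (forall r e, decode_interval b0 b1 s = Some (IFin r e) -> g r e = g' r e) ->
  interval_map g s = interval_map g' s.
Proof. by rewrite /interval_map; case: decode_interval => [[r e|]|] // /(_ r e erefl) ->. Qed.

Variables (g : R -> R -> R * R) (f : R -> R) (K : R).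
Hypothesis K_gt0 : 0 < K.
Hypothesis g_dyadic : forall r e, dyadic r -> dyadic e -> 0 <= e ->
  dyadic (g r e).1 /\ dyadic (g r e).2.
Hypothesis g_contains : forall r e x, r - e <= x <= r + e -> (g r e).1 <= f x <= (g r e).2.
Hypothesis g_nested : forall r e r' e', 0 <= e' -> r - e <= r' - e' -> r' + e' <= r + e ->
  (g r e).1 <= (g r' e').1 /\ (g r' e').2 <= (g r e).2.
Hypothesis g_width : forall r e, 0 <= e -> (g r e).2 - (g r e).1 <= K * e.

Lemma decode_interval_map s r e :
  decode_interval b0 b1 s = Some (IFin r e) ->
  decode_interval b0 b1 (interval_map g s) = Some (itv_of (g r e)).
Proof.
move=> decode_s; rewrite /interval_map decode_s /enc_itv; apply epsilon_spec.
have [dr de e_ge0] := decode_interval_fin decode_s.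
have [dlo dhi] := g_dyadic dr de e_ge0.
have le_lohi := g_contains (r := r) (e := e) (x := r) ltac:(lra).
by apply: (decode_interval_onto b0_neq_b1); [apply/dyadic_half/dyadicD|apply/dyadic_half/dyadicB|lra].
Qed.

Lemma decode_interval_map_inf s :
  decode_interval b0 b1 s = Some IInf -> decode_interval b0 b1 (interval_map g s) = Some IInf.
Proof. by rewrite /interval_map => ->. Qed.

Lemma interval_map_is_name : IsFunNameI b0 b1 (interval_map g) f.
Proof.
move=> phi x _ name; have [decodes [nested _]] := name.
split; [|split].
- move=> n; have [[r e|] decode_n] := decodes n.
    by eexists; apply: decode_interval_map decode_n.
  by eexists; apply: decode_interval_map_inf decode_n.
- move=> n I' J' decode_I' decode_J' y.
  have [[r e|] decode_n] := decodes n; last first.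
    by rewrite (decode_interval_map_inf decode_n) in decode_I'; case: decode_I' => <-.
  have [[r' e'|] decode_Sn] := decodes n.+1; last first.
    by have /= := nested _ _ _ decode_n decode_Sn (r + e + 1) I; lra.
  rewrite (decode_interval_map decode_n) in decode_I'.
  rewrite (decode_interval_map decode_Sn) in decode_J'.
  case: decode_I' => <-; case: decode_J' => <-; rewrite !in_itv_of.
  have [_ _ e'_ge0] := decode_interval_fin decode_Sn.
  have [lo hi] := interval_incl_fin e'_ge0 (nested _ _ _ decode_n decode_Sn).
  by have [] := g_nested e'_ge0 lo hi; lra.
- move=> y; split=> [in_all|-> n I decode_I]; last first.
    have [[r e|] decode_n] := decodes n; last first.
      by rewrite (decode_interval_map_inf decode_n) in decode_I; case: decode_I => <-.
    rewrite (decode_interval_map decode_n) in decode_I; case: decode_I => <-.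
    by apply/in_itv_of/g_contains; have /= := name_contains name decode_n.
  apply: cond_eq => d d_gt0.
  have [n [r [e [decode_n le_e]]]] := name_small name (eps := d / (2 * K)) ltac:(
    apply: Rdiv_lt_0_compat; lra).
  have /in_itv_of := in_all n _ (decode_interval_map decode_n).
  have := g_contains (r := r) (e := e) (x := x) (name_contains name decode_n).
  have [_ _ e_ge0] := decode_interval_fin decode_n.
  have : K * e <= d / 2.
    have -> : d / 2 = K * (d / (2 * K)) by field; lra.
    by apply: Rmult_le_compat_l; lra.
  by have := g_width r e_ge0; move=> ? ? ? ?; apply: Rabs_def1; lra.
Qed.

Lemma interval_map_modcond n N :
  K * / 2 ^ N.+1 <= / 2 ^ n -> ModCondI b0 b1 (interval_map g) n N.
Proof.
move=> le_K s r e decode_s le_e; have [_ _ e_ge0] := decode_interval_fin decode_s.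
exists (((g r e).1 + (g r e).2) / 2), (((g r e).2 - (g r e).1) / 2).
split; first exact: decode_interval_map.
have : K * e <= K * / 2 ^ N.+1 by apply: Rmult_le_compat_l; rewrite ?ipow2_S; lra.
by have := g_width r e_ge0; lra.
Qed.

End IntervalMaps.

(** * Tents and their interval names *)

Definition cap (H L d : R) : R := Rmax 0 (H - L * d).
Definition tent (H L x0 x : R) : R := cap H L (Rabs (x - x0)).
Definition itv_dist (x0 r e : R) : R := Rmax 0 (Rabs (r - x0) - e).

(* Intervals wider than 2^-j are answered by a function of e alone, and narrow
   ones are padded by e: an interval far from x0 therefore gets the same answer
   from every tent of height at most 2^-j. *)
Definition enclosure (H L x0 : R) (j : nat) (r e : R) : R * R :=
  if Rlt_dec (/ 2 ^ j) e then (- (2 * e), 2 * e)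
  else (Rmax 0 (tent H L x0 r - L * e) - e, cap H L (itv_dist x0 r e) + e).

Definition blank_enclosure (j : nat) (e : R) : R * R :=
  if Rlt_dec (/ 2 ^ j) e then (- (2 * e), 2 * e) else (- e, e).

Lemma Rmax_r0 x : x <= 0 -> Rmax 0 x = 0.
Proof. by move=> ?; rewrite Rmax_left. Qed.

Section Tent.
Variables (H L x0 : R).
Hypotheses (H_ge0 : 0 <= H) (L_ge0 : 0 <= L).

Lemma cap_ge0 d : 0 <= cap H L d.
Proof. exact: Rmax_l. Qed.

Lemma cap_le d : 0 <= d -> cap H L d <= H.
Proof. by move=> d_ge0; apply: Rmax_lub => //; have := Rmult_le_pos _ _ L_ge0 d_ge0; lra. Qed.

Lemma cap_antitone d d' : d <= d' -> cap H L d' <= cap H L d.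
Proof.
move=> le_dd'; apply: Rmax_lub; first exact: Rmax_l.
by apply: Rle_trans (Rmax_r _ _); have := Rmult_le_compat_l _ _ _ L_ge0 le_dd'; lra.
Qed.

Lemma cap_sub_le d a : 0 <= a -> cap H L (d - a) <= cap H L d + L * a.
Proof.
move=> a_ge0; rewrite /cap Rmult_minus_distr_l.
have := Rmax_l 0 (H - L * d); have := Rmax_r 0 (H - L * d).
by have := Rmult_le_pos _ _ L_ge0 a_ge0; move=> ? ? ?; apply: Rmax_lub; lra.
Qed.

Lemma tent_bounds x : 0 <= tent H L x0 x <= H.
Proof. by split; [apply: cap_ge0|apply/cap_le/Rabs_pos]. Qed.

Lemma tent_lipschitz x y : tent H L x0 y <= tent H L x0 x + L * Rabs (x - y).
Proof.
apply: Rle_trans _ (cap_sub_le _ (Rabs_pos (x - y))); apply: cap_antitone.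
have := Rabs_triang (y - x0) (x - y); rewrite (_ : y - x0 + (x - y) = x - x0); [lra|ring].
Qed.

Lemma tent_continuous : Continuous01 (tent H L x0).
Proof.
move=> x _ eps eps_gt0; exists (eps / (L + 1)); split=> [|y _ near].
  by apply: Rdiv_lt_0_compat; lra.
have : L * Rabs (x - y) <= L * (eps / (L + 1)) by apply: Rmult_le_compat_l; lra.
have : L * (eps / (L + 1)) < eps.
  apply/(Rmult_lt_reg_r (L + 1)); first lra.
  by rewrite (_ : _ * _ * _ = L * eps); [nra|field; lra].
have := tent_lipschitz x y; have := tent_lipschitz y x; rewrite Rabs_minus_sym.
by move=> ? ? ? ?; apply: Rabs_def1; lra.
Qed.

Lemma itv_dist_le r e x : r - e <= x <= r + e -> itv_dist x0 r e <= Rabs (x - x0).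
Proof.
move=> x_in; apply: Rmax_lub; first exact: Rabs_pos.
have := Rabs_triang (x - x0) (r - x); rewrite (_ : x - x0 + (r - x) = r - x0); last ring.
have : Rabs (r - x) <= e by apply: Rabs_le; lra.
lra.
Qed.

Lemma itv_dist_antitone r e r' e' : r - e <= r' - e' -> r' + e' <= r + e ->
  itv_dist x0 r e <= itv_dist x0 r' e'.
Proof.
move=> lo hi; apply: Rmax_lub; first exact: Rmax_l; apply: Rle_trans (Rmax_r _ _).
have := Rabs_triang (r' - x0) (r - r'); rewrite (_ : r' - x0 + (r - r') = r - x0); last ring.
have : Rabs (r - r') <= e - e' by apply: Rabs_le; lra.
lra.
Qed.

End Tent.

Section TentEnclosure.
Variables (H L x0 : R) (j : nat).
Hypotheses (H_ge0 : 0 <= H) (H_le : H <= / 2 ^ j) (L_ge0 : 0 <= L).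

Lemma enclosure_contains r e x : r - e <= x <= r + e ->
  (enclosure H L x0 j r e).1 <= tent H L x0 x <= (enclosure H L x0 j r e).2.
Proof.
move=> x_in; have := tent_bounds x0 H_ge0 L_ge0 x; rewrite /enclosure; case: Rlt_dec => /= [|_]; first lra.
have up : tent H L x0 x <= cap H L (itv_dist x0 r e) := cap_antitone H L_ge0 (itv_dist_le x0 x_in).
have : L * Rabs (x - r) <= L * e by apply/Rmult_le_compat_l/Rabs_le; lra.
have := tent_lipschitz H x0 L_ge0 x r => ? ? ?.
have : Rmax 0 (tent H L x0 r - L * e) <= tent H L x0 x + e by apply: Rmax_lub; lra.
lra.
Qed.

Lemma enclosure_nested r e r' e' : 0 <= e' -> r - e <= r' - e' -> r' + e' <= r + e ->
  (enclosure H L x0 j r e).1 <= (enclosure H L x0 j r' e').1 /\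
  (enclosure H L x0 j r' e').2 <= (enclosure H L x0 j r e).2.
Proof.
move=> e'_ge0 lo hi; rewrite /enclosure.
have cap'_le : cap H L (itv_dist x0 r' e') <= H := cap_le H_ge0 L_ge0 (Rmax_l _ _).
have := Rmax_l 0 (tent H L x0 r' - L * e').
case: Rlt_dec => /= [wide|/Rnot_lt_le narrow]; case: Rlt_dec => /= [wide'|/Rnot_lt_le narrow'] ?;
  try lra.
have : L * Rabs (r' - r) <= L * (e - e') by apply/Rmult_le_compat_l/Rabs_le; lra.
have := tent_lipschitz H x0 L_ge0 r' r.
have := cap_antitone H L_ge0 (itv_dist_antitone x0 lo hi).
rewrite Rmult_minus_distr_l => ? ? ?.
have : Rmax 0 (tent H L x0 r - L * e) <= Rmax 0 (tent H L x0 r' - L * e').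
  by apply: Rle_max_compat_l; lra.
lra.
Qed.

Lemma enclosure_width r e : 0 <= e ->
  (enclosure H L x0 j r e).2 - (enclosure H L x0 j r e).1 <= 2 * (L + 2) * e.
Proof.
move=> e_ge0; have := Rmult_le_pos _ _ L_ge0 e_ge0.
rewrite /enclosure; case: Rlt_dec => /= _ Le_ge0; first lra.
have : cap H L (itv_dist x0 r e) <= tent H L x0 r + L * e.
  apply: Rle_trans (cap_sub_le H L_ge0 _ e_ge0); apply: cap_antitone => //.
  exact: Rmax_r.
have := Rmax_r 0 (tent H L x0 r - L * e); lra.
Qed.

Lemma enclosure_blank r e : 0 <= e -> (e <= / 2 ^ j -> H <= L * itv_dist x0 r e) ->
  enclosure H L x0 j r e = blank_enclosure j e.
Proof.
move=> e_ge0 far; rewrite /enclosure /blank_enclosure.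
case: Rlt_dec => // narrow; have far_e := far (Rnot_lt_le _ _ narrow).
have : L * itv_dist x0 r e <= L * (Rabs (r - x0) + e).
  apply: Rmult_le_compat_l => //; apply: Rmax_lub; have := Rabs_pos (r - x0); lra.
have := Rmult_le_pos _ _ L_ge0 e_ge0; rewrite Rmult_plus_distr_l => ? ?.
have tent_r : tent H L x0 r <= L * e by apply: Rmax_lub; lra.
rewrite /cap !Rmax_r0; [by congr pair; ring|lra|lra].
Qed.

End TentEnclosure.

Lemma dyadic_cap H L d : dyadic H -> dyadic L -> dyadic d -> dyadic (cap H L d).
Proof. by move=> dH dL dd; apply: dyadic_max (dyadic_IZR 0) _; apply/dyadicB/dyadicM. Qed.

Lemma enclosure_dyadic H L x0 j : dyadic H -> dyadic L -> dyadic x0 ->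
  forall r e, dyadic r -> dyadic e -> 0 <= e ->
  dyadic (enclosure H L x0 j r e).1 /\ dyadic (enclosure H L x0 j r e).2.
Proof.
move=> dH dL dx0 r e dr de _; have d2e : dyadic (2 * e) by apply: dyadicM (dyadic_IZR 2) de.
rewrite /enclosure; case: Rlt_dec => /= _; first by split=> //; apply: dyadicN.
have d_abs : dyadic (Rabs (r - x0)) by apply/dyadic_abs/dyadicB.
have d_dist : dyadic (itv_dist x0 r e) by apply: dyadic_max (dyadic_IZR 0) (dyadicB d_abs de).
have d_tent : dyadic (tent H L x0 r) by apply: dyadic_cap.
split; last by apply: dyadicD (dyadic_cap dH dL d_dist) de.
by apply: dyadicB (dyadic_max (dyadic_IZR 0) (dyadicB d_tent (dyadicM dL de))) de.
Qed.

Lemma tent_modcond_bound L n p : 0 <= L <= 2 ^ p ->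
  2 * (L + 2) * / 2 ^ (n + (p + 2)).+1 <= / 2 ^ n.
Proof.
move=> [L_ge0 L_le]; have -> : (n + (p + 2)).+1 = (n + p + 3)%N by lia.
rewrite !pow_add !Rinv_mult /=.
have : L * / 2 ^ p <= 1.
  rewrite -(Rinv_r (2 ^ p)); last exact/Rgt_not_eq/pow2_gt0.
  by apply: Rmult_le_compat_r => //; apply/Rlt_le/ipow2_gt0.
have := ipow2_le1 p; have := ipow2_gt0 n; have := ipow2_gt0 p; nra.
Qed.

Section TentNames.
Variables (S : finType) (b0 b1 : S).
Hypothesis b0_neq_b1 : b0 != b1.

Definition tent_name (H L x0 : R) (j : nat) : seq S -> seq S :=
  interval_map b0 b1 (enclosure H L x0 j).

Definition IsNameWithParam (psi : seq S -> seq S) (f : R -> R) (m : nat -> nat) : Prop :=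
  [/\ Continuous01 f, IsFunNameI b0 b1 psi f & IsMuIf b0 b1 psi f m].

Lemma tent_name_admissible H L x0 j p :
  dyadic H -> dyadic L -> dyadic x0 -> 0 <= H <= / 2 ^ j -> 0 <= L <= 2 ^ p ->
  exists m, IsNameWithParam (tent_name H L x0 j) (tent H L x0) m /\
    forall n, (m n <= n + p + 3)%N.
Proof.
move=> dH dL dx0 [H_ge0 H_le] L_bounds; have [L_ge0 _] := L_bounds.
have K_gt0 : 0 < 2 * (L + 2) by lra.
have g_dyadic := enclosure_dyadic j dH dL dx0.
have g_contains := enclosure_contains x0 H_ge0 H_le L_ge0.
have g_nested := enclosure_nested x0 H_ge0 H_le L_ge0.
have g_width := enclosure_width H x0 j L_ge0.
have [m [mu le_m]] : exists m, IsMuIf b0 b1 (tent_name H L x0 j) (tent H L x0) m /\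
    forall n, (m n <= 1 + (n + (p + 2)))%N.
  apply: mu_if_exists => [x _|n].
  - have := tent_bounds x0 H_ge0 L_ge0 x; have := ipow2_le1 j => ? ?.
    by rewrite Rabs_pos_eq /=; lra.
  - apply: (interval_map_modcond b0_neq_b1 K_gt0 g_dyadic g_contains g_width).
    exact: tent_modcond_bound.
exists m; split; last by move=> n; have := le_m n; lia.
split=> //; first exact: tent_continuous.
exact: (interval_map_is_name b0_neq_b1 K_gt0 g_dyadic g_contains g_nested g_width).
Qed.

Lemma zero_tent_admissible j :
  exists m, IsNameWithParam (tent_name 0 1 0 j) (tent 0 1 0) m /\ forall n, (m n <= n + 3)%N.
Proof.
have [m [adm le_m]] := tent_name_admissible (j := j) (p := 0)
  (dyadic_IZR 0) (dyadic_IZR 1) (dyadic_IZR 0)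
  ltac:(split; [lra|exact/Rlt_le/ipow2_gt0]) ltac:(rewrite /=; lra).
by exists m; split=> // n; have := le_m n; lia.
Qed.

Lemma steep_tent_admissible j q x0 : dyadic x0 ->
  exists m, IsNameWithParam (tent_name (/ 2 ^ j) (2 ^ (q - j)) x0 j)
                            (tent (/ 2 ^ j) (2 ^ (q - j)) x0) m.
Proof.
move=> dx0; have [m [adm _]] := tent_name_admissible (j := j) (p := (q - j)%N)
  (dyadic_ipow2 j) (dyadic_pow2 (q - j)) dx0
  ltac:(split; [exact/Rlt_le/ipow2_gt0|lra]) ltac:(split; [exact/Rlt_le/pow2_gt0|lra]).
by exists m.
Qed.

Lemma tent_name_blank H L x0 j s : 0 <= H -> 0 <= L ->
  (forall r e, decode_interval b0 b1 s = Some (IFin r e) -> e <= / 2 ^ j ->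
     H <= L * itv_dist x0 r e) ->
  tent_name H L x0 j s = interval_map b0 b1 (fun _ => blank_enclosure j) s.
Proof.
move=> H_ge0 L_ge0 far; apply: interval_map_ext => r e decode_s.
have [_ _ e_ge0] := decode_interval_fin decode_s.
exact: enclosure_blank (far _ _ decode_s).
Qed.

End TentNames.

Lemma steep_slope j q : (j <= q)%N -> 2 ^ (q - j) * / 2 ^ q = / 2 ^ j.
Proof.
move=> le_jq; rewrite -{2}(subnK le_jq) pow_add Rinv_mult -Rmult_assoc Rinv_r ?Rmult_1_l //.
exact/Rgt_not_eq/pow2_gt0.
Qed.

(* Both names answer s by its blank enclosure: wide intervals by construction, narrow
   ones because the steep tent vanishes beyond distance 2^-q <= 2^-(j+3) from x0. *)
Lemma steep_tent_name_agrees (S : finType) (b0 b1 : S) j q x0 (s : seq S) : (j.+3 <= q)%N ->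
  (forall r e, decode_interval b0 b1 s = Some (IFin r e) -> e <= / 2 ^ j ->
     / 2 ^ j.+3 < Rabs (r - x0) - e) ->
  tent_name b0 b1 0 1 0 j s = tent_name b0 b1 (/ 2 ^ j) (2 ^ (q - j)) x0 j s.
Proof.
move=> le_q far.
rewrite (tent_name_blank (Rle_refl 0) Rle_0_1) => [|r e _ _]; last first.
  by rewrite Rmult_1_l; apply: Rmax_l.
rewrite (tent_name_blank (Rlt_le _ _ (ipow2_gt0 j)) (Rlt_le _ _ (pow2_gt0 _))) // => r e decode_s small.
rewrite -(steep_slope (j := j) (q := q)); last lia.
apply: Rmult_le_compat_l; first exact/Rlt_le/pow2_gt0.
have := ipow2_le le_q; have := far _ _ decode_s small.
by have := Rmax_r 0 (Rabs (r - x0) - e); rewrite /itv_dist; lra.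
Qed.

(** * The adversary *)

Lemma avoiding_point (S : finType) (b0 b1 : S) (qs : seq (seq S)) j :
  (9 * size qs < 2 ^ j.+1)%N ->
  exists x0, [/\ dyadic x0, / 2 ^ j.+3 <= x0, x0 + / 2 ^ j.+3 <= 1 &
    forall s r e, s \in qs -> decode_interval b0 b1 s = Some (IFin r e) ->
      e <= / 2 ^ j -> / 2 ^ j.+3 < Rabs (r - x0) - e].
Proof.
move=> few; pose w := / 2 ^ j.+2; have w_gt0 : 0 < w := ipow2_gt0 _.
have u_eq : / 2 ^ j = 4 * w by rewrite /w !ipow2_S; lra.
have d_eq : / 2 ^ j.+3 = w / 2 by rewrite /w ipow2_S.
pose c i := (2 * INR i + 1) * w.
pose hit s i := exists r e, decode_interval b0 b1 s = Some (IFin r e) /\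
  e <= / 2 ^ j /\ Rabs (r - c i) - e <= / 2 ^ j.+3.
have window s i i' : hit s i -> hit s i' -> (i <= i' + 4)%N.
  move=> [r [e [decode_s [le_e near]]]] [r' [e' [decode_s' [_ near']]]].
  rewrite decode_s in decode_s'; case: decode_s' => <- <- in near'.
  have := Rabs_triang (c i - r) (r - c i'); rewrite Rabs_minus_sym.
  rewrite (_ : c i - r + (r - c i') = c i - c i'); last ring.
  case: (leqP i (i' + 4)) => // lt_i'i.
  have gap : INR (i' + 5) <= INR i by apply/le_INR/leP; lia.
  rewrite -plusE plus_INR /= in gap.
  have : 10 * w <= c i - c i' by rewrite /c; nra.
  by have := Rle_abs (c i - c i'); lra.
have [i lt_i unhit] := unhit_index window few.
have i_le : INR i + 1 <= 2 ^ j.+1 by rewrite -INR_expn2 -S_INR; apply/le_INR/leP.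
have P_w : 2 ^ j.+1 * w = / 2 by rewrite /w /=; have := pow2_gt0 j; move=> ?; field; lra.
have := pos_INR i => i_ge0.
exists (c i); split.
- apply: dyadicM (dyadic_ipow2 _); apply: dyadicD (dyadic_IZR 1).
  exact: dyadicM (dyadic_IZR 2) (dyadic_INR i).
- by rewrite /c d_eq; nra.
- by rewrite /c d_eq; nra.
- move=> s r e s_in decode_s le_e; apply: Rnot_le_lt => near.
  by apply: unhit s_in _; exists r, e.
Qed.

Lemma steep_tent_not_modulus j K x0 nu : nu j.+1 = K -> 0 <= x0 -> x0 + / 2 ^ j.+3 <= 1 ->
  ~ IsModulus (tent (/ 2 ^ j) (2 ^ (maxn j.+3 K - j)) x0) nu.
Proof.
move=> nu_j x0_ge0 x0_le modulus; set q := maxn j.+3 K.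
have le_jq : (j <= q)%N by rewrite leq_max; lia.
have : / 2 ^ q <= / 2 ^ j.+3 by apply/ipow2_le/leq_maxl.
have := ipow2_gt0 q; have := ipow2_gt0 j => u_gt0 d_gt0 le_d.
have f_x0 : tent (/ 2 ^ j) (2 ^ (q - j)) x0 x0 = / 2 ^ j.
  by rewrite /tent /cap Rminus_diag Rabs_R0 Rmult_0_r Rminus_0_r Rmax_right //; lra.
have f_y : tent (/ 2 ^ j) (2 ^ (q - j)) x0 (x0 + / 2 ^ q) = 0.
  rewrite /tent /cap (_ : x0 + _ - x0 = / 2 ^ q); last ring.
  by rewrite Rabs_pos_eq ?steep_slope ?Rminus_diag ?Rmax_r0 //; lra.
have dist : Rabs (x0 - (x0 + / 2 ^ q)) <= / 2 ^ nu j.+1.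
  rewrite (_ : x0 - _ = - / 2 ^ q); last ring.
  by rewrite Rabs_Ropp Rabs_pos_eq; [apply: ipow2_le; rewrite nu_j leq_maxr|lra].
have := modulus j.+1 x0 (x0 + / 2 ^ q) ltac:(lra) ltac:(lra) dist.
by rewrite f_x0 f_y Rminus_0_r ipow2_S Rabs_pos_eq; lra.
Qed.

Theorem mainTheorem18 (S : finType) (b0 b1 : S) (hb : b0 != b1) :
  ~ exists (M : OracleMachine S) (P Q : sop),
    forall (psi : seq S -> seq S) (f : R -> R) (m : nat -> nat),
      Continuous01 f -> IsFunNameI b0 b1 psi f -> IsMuIf b0 b1 psi f m ->
      (* M^psi is total *)
      (forall a, exists t out, HaltsIn M psi a t out) /\
      (* xi_{N^N}(M^psi) = (n |-> |M^psi(1^n)|) is a modulus of continuity of f *)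
      (forall nu : nat -> nat,
         (forall n, exists t out, HaltsIn M psi (nseq n b1) t out /\ nu n = size out) ->
         IsModulus f nu) /\
      (* Time_{M}(psi, a) <= P(mu(psi), |a|) *)
      (forall a t out, HaltsIn M psi a t out -> (t <= sop_eval P m (size a))%N) /\
      (* |M^psi|(n) <= Q(mu(psi), n) *)
      (forall n a t out, (size a <= n)%N -> HaltsIn M psi a t out ->
         (size out <= sop_eval Q m n)%N).
Proof.
move=> [M [P [Q admissible]]].
have [j few_steps] := sop_eval_shift_lt_exp2 P 3 9.
pose a := nseq j.+1 b1.
have [m0 [[cont0 name0 mu0] le_m0]] := zero_tent_admissible hb j.
have [total0 [_ [time0 _]]] := admissible _ _ _ cont0 name0 mu0.
have [t [out run0]] := total0 a.
pose qs := queries (tent_name b0 b1 0 1 0 j) (init_config M a) t.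
have few_queries : (9 * size qs < 2 ^ j.+1)%N.
  apply: leq_ltn_trans few_steps; rewrite leq_mul2l; apply/orP; right.
  apply: leq_trans (size_queries _ _ _) (leq_trans (time0 _ _ _ run0) _).
  by rewrite size_nseq; apply: sop_eval_mono => [x|x y]; [have := le_m0 x|]; lia.
have [x0 [dx0 x0_ge x0_le far]] := avoiding_point b0 b1 few_queries.
pose q := maxn j.+3 (size out).
have [m1 [cont1 name1 mu1]] := steep_tent_admissible hb j q dx0.
have [total1 [modulus1 _]] := admissible _ _ _ cont1 name1 mu1.
have run1 : HaltsIn M (tent_name b0 b1 (/ 2 ^ j) (2 ^ (q - j)) x0 j) a t out.
  apply: halts_agree run0 _ => s s_in.
  by apply: steep_tent_name_agrees (leq_maxl _ _) _ => r e; apply: far.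
have [nu nu_out] := halting_output_length b1 total1.
have [t' [out' [run1' nu_j]]] := nu_out j.+1.
rewrite (halts_output_unique run1' run1) in nu_j.
apply: steep_tent_not_modulus nu_j _ x0_le (modulus1 nu nu_out).
by have := ipow2_gt0 j.+3; lra.
Qed.
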